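(* Let $G_1$ and $G_2$ be graphs with transition matrices $H_{G_1}(t)$ and $H_{G_2}(t)$. Suppose that $G_1$ is periodic at a vertex $u$ at time $\tau\neq 0$, i.e. $H_{G_1}(\tau)e_u=\gamma e_u$ for some $|\gamma|=1$, and that $G_2$ exhibits perfect state transfer from a vertex $v$ to a vertex $w$ at time $\eta\neq 0$, i.e. $H_{G_2}(\eta)e_w=\gamma' e_v$ for some $|\gamma'|=1$. If $\tau$ and $\eta$ are linearly independent over $\mathbb Q$, then the Cartesian product $G_1\square G_2$ has pretty good state transfer between the vertices $(u,v)$ and $(u,w)$.
   Context: The transition matrix of a graph with adjacency matrix $A$ is $H(t)=\exp(-itA)$, $t\in\mathbb R$; $e_u$ is the standard basis vector of vertex $u$. The Cartesian product $G_1\square G_2$ has vertex set $V(G_1)\times V(G_2)$, with $(u_1,u_2)\sim(v_1,v_2)$ iff either $u_1\sim v_1$ in $G_1$ and $u_2=v_2$, or $u_1=v_1$ and $u_2\sim v_2$ in $G_2$. A graph has pretty good state transfer between vertices $x$ and $y$ if for every $\epsilon>0$ there is $t\in\mathbb R$ with $\big||e_x^TH(t)e_y|-1\big|<\epsilon$. *)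

From Stdlib Require Import Reals QArith.
From mathcomp Require Import all_boot.
Set Implicit Arguments.
Unset Strict Implicit.
Unset Printing Implicit Defensive.

(* A graph: finite vertex type V with adjacency relation e (symmetric,
   irreflexive = simple undirected graph).  A is its adjacency matrix,
   A x y = 1 iff e x y. *)
Definition simple_graph (V : finType) (e : rel V) : Prop :=
  @symmetric V e /\ @irreflexive V e.

Fixpoint adjpow (V : finType) (e : rel V) (k : nat) (x y : V) : nat :=
  match k with
  | O => nat_of_bool (x == y)
  | k'.+1 => (\sum_(z : V | e x z) adjpow e k' z y)%N
  end.

Open Scope R_scope.

(* Complex numbers as pairs (real part, imaginary part). *)
Definition Cx := (R * R)%type.
Definition Cmod (z : Cx) : R := sqrt (fst z * fst z + snd z * snd z).
Definition Cscale (g : Cx) (b : bool) : Cx := if b then g else (0, 0).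

Definition negi_pow (k : nat) : Cx :=
  match Nat.modulo k 4%nat with
  | O => (1, 0)
  | S O => (0, (-1))
  | S (S O) => ((-1), 0)
  | _ => (0, 1)
  end.

(* k-th term of the exponential series of exp(-itA), entry (x,y):
   (-it)^k / k! * (A^k)_{xy} *)
Definition Hterm (V : finType) (e : rel V) (t : R) (x y : V) (k : nat) : Cx :=
  let c := (t ^ k / INR (Factorial.fact k)) * INR (adjpow e k x y) in
  (fst (negi_pow k) * c, snd (negi_pow k) * c).

(* "(H(t))_{xy} = z", where H(t) = exp(-itA) = sum_k (-itA)^k / k!,
   i.e. the series converges (componentwise) to z. *)
Definition H_entry (V : finType) (e : rel V) (t : R) (x y : V) (z : Cx) : Prop :=
  Un_cv (fun n => sum_f_R0 (fun k => fst (Hterm e t x y k)) n) (fst z) /\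
  Un_cv (fun n => sum_f_R0 (fun k => snd (Hterm e t x y k)) n) (snd z).

Definition cart_rel (V1 V2 : finType) (e1 : rel V1) (e2 : rel V2)
  : rel (V1 * V2)%type :=
  fun p q => (e1 p.1 q.1 && (p.2 == q.2)) || ((p.1 == q.1) && e2 p.2 q.2).

Definition pgst (V : finType) (e : rel V) (x y : V) : Prop :=
  forall eps : R, eps > 0 ->
    exists (t : R) (z : Cx), H_entry e t x y z /\ Rabs (Cmod z - 1) < eps.

Definition Q_lin_indep (a b : R) : Prop :=
  forall p q : Q, Q2R p * a + Q2R q * b = 0 -> (p == 0)%Q /\ (q == 0)%Q.

(* Since the adjacency matrix of G1 □ G2 is A1 ⊗ I + I ⊗ A2 with commuting summands,
   H(t) = H1(t) ⊗ H2(t), so |H(t)_{(u,v),(u,w)}| = |H1(t)_{uu}| |H2(t)_{vw}|.  The group law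
   H(s + t) = H(s) H(t) and H(-t) = conj H(t) make |H1(m τ)_{uu}| = 1 for every integer m and
   |H2(s + η + 2kη)_{vw}| = |H2(s)_{vv}| for every integer k.  As τ and 2η are independent
   over Q, some m τ lies within any δ of some η + 2kη (Dirichlet), and |H2(s)_{vv}| → 1 as
   s → 0. *)

From Stdlib Require Import Reals QArith Lra Lia Psatz ZArith.
From mathcomp Require Import all_boot zify.
From HB Require Import structures.
From Coquelicot Require Import Rcomplements Hierarchy Lim_seq Series PSeries ElemFct.
Open Scope R_scope.
Set Implicit Arguments.
Unset Strict Implicit.

HB.instance Definition _ := Monoid.isComLaw.Build R 0 Rplus
  (fun x y z => esym (Rplus_assoc x y z)) Rplus_comm Rplus_0_l.

Lemma big_Rmult_distr_l (T : finType) (c : R) (F : T -> R) :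
  c * \big[Rplus/0]_(i : T) F i = \big[Rplus/0]_(i : T) (c * F i).
Proof. by elim/big_rec2: _ => [|i a b _ <-]; ring. Qed.

Lemma big_Rplus_delta (T : finType) (F : T -> R) (b : T) :
  (forall z, z != b -> F z = 0) -> \big[Rplus/0]_(i : T) F i = F b.
Proof. by move=> F0; rewrite (bigD1 b) //= big1 ?Rplus_0_r. Qed.

Lemma INR_big_sum (T : finType) (F : T -> nat) :
  INR (\sum_(i : T) F i)%N = \big[Rplus/0]_(i : T) INR (F i).
Proof. exact: (big_morph INR plus_INR). Qed.

Lemma INR_sum_ord (f : nat -> nat) n :
  INR (\sum_(k < n.+1) f k)%N = sum_f_R0 (fun k => INR (f k)) n.
Proof.
elim: n => [|n IH]; first by rewrite big_ord1.
by rewrite big_ord_recr /= plus_INR IH.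
Qed.

Lemma big_sum_f_R0 (T : finType) (F : T -> nat -> R) n :
  \big[Rplus/0]_(i : T) sum_f_R0 (F i) n = sum_f_R0 (fun j => \big[Rplus/0]_(i : T) F i j) n.
Proof. by elim: n => [|n IH] //=; rewrite big_split IH. Qed.

Lemma is_series_head (a : nat -> R) :
  (forall k, (0 < k)%N -> a k = 0) -> is_series a (a 0%N).
Proof.
move=> a0; apply/is_series_Reals => eps eps_gt0; exists 0%N => n _.
have -> : sum_f_R0 a n = a 0%N.
  by elim: n => [|n IH] //=; rewrite IH (a0 n.+1) // Rplus_0_r.
by rewrite /R_dist Rminus_eq_0 Rabs_R0.
Qed.

Lemma is_series_big (T : finType) (F : T -> nat -> R) (L : T -> R) :
  (forall i, is_series (F i) (L i)) ->
  is_series (fun n => \big[Rplus/0]_(i : T) F i n) (\big[Rplus/0]_(i : T) L i).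
Proof.
move=> FL; rewrite /index_enum; elim: (Finite.enum T) => [|i r IH].
  rewrite big_nil; apply: (is_series_ext (fun _ => 0)); first by move=> n; rewrite big_nil.
  exact: (@is_series_head (fun _ => 0)).
rewrite big_cons; have := is_series_plus _ _ _ _ (FL i) IH.
by apply: is_series_ext => n; rewrite big_cons.
Qed.

Definition Cmul (a b : Cx) : Cx := (a.1 * b.1 - a.2 * b.2, a.1 * b.2 + a.2 * b.1).
Definition Cconj (c : Cx) : Cx := (c.1, - c.2).

Lemma Cmod_eq1 c : Cmod c = 1 <-> c.1 * c.1 + c.2 * c.2 = 1.
Proof.
rewrite /Cmod; split => [c1 | ->]; last exact: sqrt_1.
by rewrite -(sqrt_sqrt (c.1 * c.1 + c.2 * c.2)) ?c1 ?Rmult_1_l //; nra.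
Qed.

Lemma Cmod_Cmul c d : Cmod (Cmul c d) = Cmod c * Cmod d.
Proof. by rewrite /Cmod /Cmul /= -sqrt_mult; [congr sqrt; ring | nra | nra]. Qed.

Lemma Cmod_Cconj c : Cmod (Cconj c) = Cmod c.
Proof. by rewrite /Cmod /Cconj /=; congr sqrt; ring. Qed.

Lemma Cmod_sub1_le z : Rabs (Cmod z - 1) <= Rabs (z.1 - 1) + Rabs z.2.
Proof.
rewrite /Cmod; set r := sqrt _.
have r_ge0 : 0 <= r := sqrt_pos _.
have r2 : r * r = z.1 * z.1 + z.2 * z.2 by apply: sqrt_sqrt; nra.
have sq1 : Rabs z.1 * Rabs z.1 = z.1 * z.1 by rewrite -Rabs_mult Rabs_pos_eq; nra.
have sq2 : Rabs z.2 * Rabs z.2 = z.2 * z.2 by rewrite -Rabs_mult Rabs_pos_eq; nra.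
have := Rabs_pos z.1; have := Rabs_pos z.2.
have := Rabs_triang_inv z.1 1; have := Rabs_triang_inv 1 z.1.
rewrite Rabs_R1 (Rabs_minus_sym 1) => *.
have r_le : r <= Rabs z.1 + Rabs z.2 by nra.
have r_ge : Rabs z.1 <= r by nra.
by apply: Rabs_le; split; lra.
Qed.

Lemma negi_pow_S k : negi_pow k.+1 = ((negi_pow k).2, - (negi_pow k).1).
Proof.
rewrite /negi_pow -addn1 Nat.Div0.add_mod.
have := Nat.mod_upper_bound k 4; case: (Nat.modulo k 4) => [|[|[|[|r]]]] /= lt4;
  by [congr pair; lra | lia].
Qed.

Lemma negi_pow_add j k : negi_pow (j + k) = Cmul (negi_pow j) (negi_pow k).
Proof.
elim: j => [|j IH]; first by rewrite /Cmul /=; case: (negi_pow k) => a b /=; congr pair; ring.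
by rewrite addSn !negi_pow_S IH /Cmul /=; congr pair; ring.
Qed.

Lemma negi_pow_bound k : Rabs (negi_pow k).1 <= 1 /\ Rabs (negi_pow k).2 <= 1.
Proof.
elim: k => [|k [IH1 IH2]]; last by rewrite negi_pow_S /= Rabs_Ropp.
by rewrite /= Rabs_R1 Rabs_R0; lra.
Qed.

Lemma negi_pow_odd k : if odd k then (negi_pow k).1 = 0 else (negi_pow k).2 = 0.
Proof.
elim: k => [//|k]; rewrite negi_pow_S /=; case: (odd k) => /= ->; lra.
Qed.

Lemma Cmul_Cconj_r z c : Cmod c = 1 -> Cmul (Cmul z c) (Cconj c) = z.
Proof.
move/Cmod_eq1=> c1; case: z => z1 z2; rewrite /Cmul /Cconj /=; congr pair.
- by transitivity (z1 * (c.1 * c.1 + c.2 * c.2)); [ring | rewrite c1; ring].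
- by transitivity (z2 * (c.1 * c.1 + c.2 * c.2)); [ring | rewrite c1; ring].
Qed.

Definition expo_term (x : R) (k : nat) : R := x ^ k / INR (fact k).

Lemma is_series_expo_term x : is_series (expo_term x) (exp x).
Proof.
apply/is_series_Reals => eps eps_gt0.
have [N HN] := proj1 (is_pseries_Reals _ _ _) (is_exp_Reals x) eps eps_gt0.
exists N => n le_Nn.
rewrite (PartSum.sum_eq _ (fun k => / INR (fact k) * x ^ k)); first exact: HN.
by move=> k _; rewrite /expo_term /Rdiv Rmult_comm.
Qed.

Lemma ex_series_Rabs_le_expo (a : nat -> R) X :
  (forall k, Rabs (a k) <= expo_term X k) -> ex_series (fun k => Rabs (a k)).
Proof.
move=> a_le; apply: (ex_series_le _ (expo_term X)); last first.
  by eexists; exact: is_series_expo_term.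
by move=> k; rewrite /norm /= /abs /= Rabs_Rabsolu.
Qed.

Lemma Rabs_mul_le_l (w r : R) : Rabs w <= 1 -> Rabs (w * r) <= Rabs r.
Proof. by move=> w_le; rewrite Rabs_mult; have := Rabs_pos r; nra. Qed.

Definition negi_series (c : nat -> R) : Cx :=
  (Series (fun k => (negi_pow k).1 * c k), Series (fun k => (negi_pow k).2 * c k)).

Definition conv (c d : nat -> R) (n : nat) : R := sum_f_R0 (fun k => c k * d (n - k)%coq_nat) n.

Section NegiSeries.

Variables (c : nat -> R) (X : R).
Hypothesis c_le : forall k, Rabs (c k) <= expo_term X k.

Lemma negi_re_le k : Rabs ((negi_pow k).1 * c k) <= expo_term X k.
Proof. exact: Rle_trans (Rabs_mul_le_l _ (negi_pow_bound k).1) (c_le k). Qed.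

Lemma negi_im_le k : Rabs ((negi_pow k).2 * c k) <= expo_term X k.
Proof. exact: Rle_trans (Rabs_mul_le_l _ (negi_pow_bound k).2) (c_le k). Qed.

Lemma ex_series_Rabs_negi_re : ex_series (fun k => Rabs ((negi_pow k).1 * c k)).
Proof. exact: ex_series_Rabs_le_expo negi_re_le. Qed.

Lemma ex_series_Rabs_negi_im : ex_series (fun k => Rabs ((negi_pow k).2 * c k)).
Proof. exact: ex_series_Rabs_le_expo negi_im_le. Qed.

Lemma is_series_negi_re : is_series (fun k => (negi_pow k).1 * c k) (negi_series c).1.
Proof. exact/Series_correct/ex_series_Rabs/ex_series_Rabs_negi_re. Qed.

Lemma is_series_negi_im : is_series (fun k => (negi_pow k).2 * c k) (negi_series c).2.
Proof. exact/Series_correct/ex_series_Rabs/ex_series_Rabs_negi_im. Qed.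

End NegiSeries.

Lemma is_series_negi_conv (c d : nat -> R) X Y :
  (forall k, Rabs (c k) <= expo_term X k) -> (forall k, Rabs (d k) <= expo_term Y k) ->
  is_series (fun n => (negi_pow n).1 * conv c d n) (Cmul (negi_series c) (negi_series d)).1 /\
  is_series (fun n => (negi_pow n).2 * conv c d n) (Cmul (negi_series c) (negi_series d)).2.
Proof.
move=> c_le d_le.
have re_c := is_series_negi_re c_le; have im_c := is_series_negi_im c_le.
have re_d := is_series_negi_re d_le; have im_d := is_series_negi_im d_le.
have Are_c := ex_series_Rabs_negi_re c_le; have Aim_c := ex_series_Rabs_negi_im c_le.
have Are_d := ex_series_Rabs_negi_re d_le; have Aim_d := ex_series_Rabs_negi_im d_le.
have split_n n k : (k <= n)%coq_nat -> negi_pow n = Cmul (negi_pow k) (negi_pow (n - k)%coq_nat).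
  by move=> le_kn; rewrite -negi_pow_add; congr negi_pow; lia.
split.
- have := is_series_minus _ _ _ _ (is_series_mult _ _ _ _ re_c re_d Are_c Are_d)
    (is_series_mult _ _ _ _ im_c im_d Aim_c Aim_d).
  apply: is_series_ext => n; change (plus ?a (opp ?b)) with (a - b).
  rewrite -minus_sum /conv scal_sum.
  by apply: PartSum.sum_eq => k le_kn; rewrite (split_n n k le_kn) /=; ring.
- have := is_series_plus _ _ _ _ (is_series_mult _ _ _ _ re_c im_d Are_c Aim_d)
    (is_series_mult _ _ _ _ im_c re_d Aim_c Are_d).
  apply: is_series_ext => n; change (plus ?a ?b) with (a + b).
  rewrite -plus_sum /conv scal_sum.
  by apply: PartSum.sum_eq => k le_kn; rewrite (split_n n k le_kn) /=; ring.
Qed.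

Lemma expo_term_add s t n : expo_term (s + t) n = conv (expo_term s) (expo_term t) n.
Proof.
rewrite /expo_term Binomial.binomial /Rdiv Rmult_comm scal_sum /conv.
apply: PartSum.sum_eq => k _; rewrite /Binomial.C.
have := INR_fact_neq_0 n; have := INR_fact_neq_0 k; have := INR_fact_neq_0 (n - k)%coq_nat.
by move=> *; field.
Qed.

Lemma pow_opp t k : (- t) ^ k = if odd k then - t ^ k else t ^ k.
Proof. by elim: k => [//|k IH] /=; rewrite IH; case: (odd k) => /=; ring. Qed.

Lemma exp_sub1_le x : 0 <= x <= 1 / 2 -> exp x - 1 <= 2 * x.
Proof.
move=> x_bd.
have exp_inv : exp x * exp (- x) = 1 by rewrite -exp_plus Rplus_opp_r exp_0.
have := exp_ineq1_le (- x); have := exp_pos x; nra.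
Qed.

Lemma Series_sub_head_le (a : nat -> R) X :
  (forall k, Rabs (a k) <= expo_term X k) -> Rabs (Series a - a 0%N) <= exp X - 1.
Proof.
move=> a_le.
have expo_ex : ex_series (expo_term X) by eexists; exact: is_series_expo_term.
have a_abs := ex_series_Rabs_le_expo a_le.
rewrite (Series_incr_1 _ (ex_series_Rabs _ a_abs)) Rplus_comm /Rminus Rplus_assoc Rplus_opp_r Rplus_0_r.
have tail_le : Series (fun k => Rabs (a k.+1)) <= Series (fun k => expo_term X k.+1).
  apply: Series_le => [k | ]; first by split; [exact: Rabs_pos | exact: a_le].
  by move/ex_series_incr_1: expo_ex.
apply: Rle_trans (Series_Rabs _ _) _; first by move/ex_series_incr_1: a_abs.
apply: Rle_trans tail_le _.
rewrite -(is_series_unique _ _ (@is_series_expo_term X)) (Series_incr_1 _ expo_ex).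
by rewrite /expo_term /= /Rdiv Rinv_1; lra.
Qed.

Definition hcoef (V : finType) (e : rel V) (t : R) (x y : V) (k : nat) : R :=
  expo_term t k * INR (adjpow e k x y).

Definition Hmx (V : finType) (e : rel V) (t : R) (x y : V) : Cx :=
  negi_series (hcoef e t x y).

Section TransitionMatrix.

Variables (V : finType) (e : rel V).

Lemma adjpow_le_expn k x y : (adjpow e k x y <= #|V| ^ k)%N.
Proof.
elim: k x => [|k IH] x /=; first by case: (x == y).
apply: (@leq_trans (\sum_(z | e x z) #|V| ^ k)%N); first exact: leq_sum.
by rewrite sum_nat_const expnS leq_mul2r max_card orbT.
Qed.

Lemma hcoef_le t x y k : Rabs (hcoef e t x y k) <= expo_term (Rabs t * INR #|V|) k.
Proof.
have fact_gt0 : 0 < / INR (fact k) by apply/Rinv_0_lt_compat/lt_0_INR/lt_O_fact.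
have adj_le : INR (adjpow e k x y) <= INR #|V| ^ k.
  rewrite -pow_INR; apply/le_INR/leP.
  suff -> : Nat.pow #|V| k = (#|V| ^ k)%N by exact: adjpow_le_expn.
  by elim: k {fact_gt0} => //= k ->; rewrite expnS.
rewrite /hcoef /expo_term /Rdiv !Rabs_mult Rpow_mult_distr -RPow_abs.
rewrite (Rabs_pos_eq (/ _)) ?(Rabs_pos_eq (INR _)); try lra; last exact: pos_INR.
apply: (Rle_trans _ (Rabs t ^ k * / INR (fact k) * INR #|V| ^ k)); last by right; ring.
apply: Rmult_le_compat_l => //; apply: Rmult_le_pos; [exact/pow_le/Rabs_pos | lra].
Qed.

Lemma H_entry_Hmx t x y : H_entry e t x y (Hmx e t x y).
Proof.
split; apply/is_series_Reals.
- exact: is_series_negi_re (hcoef_le t x y).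
- exact: is_series_negi_im (hcoef_le t x y).
Qed.

Lemma H_entry_uniq t x y z : H_entry e t x y z -> z = Hmx e t x y.
Proof.
case: z => z1 z2 [/= cv1 cv2]; have [cvH1 cvH2] := H_entry_Hmx t x y.
by rewrite (UL_sequence _ _ _ cv1 cvH1) (UL_sequence _ _ _ cv2 cvH2); case: (Hmx e t x y).
Qed.

Lemma adjpow_add j k x y :
  adjpow e (j + k) x y = (\sum_(z : V) adjpow e j x z * adjpow e k z y)%N.
Proof.
elim: j x => [|j IH] x /=.
  rewrite (bigD1 x) //= eqxx mul1n big1 ?addn0 // => z zx.
  by rewrite eq_sym (negbTE zx).
rewrite (eq_bigr _ (fun z _ => IH z)) exchange_big /=.
by apply: eq_bigr => z _; rewrite big_distrl.
Qed.

Lemma hcoef_add s t x y n :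
  hcoef e (s + t) x y n = \big[Rplus/0]_(z : V) conv (hcoef e s x z) (hcoef e t z y) n.
Proof.
rewrite /hcoef expo_term_add big_sum_f_R0 /conv Rmult_comm scal_sum.
apply: PartSum.sum_eq => k le_kn.
rewrite -(subnKC (_ : k <= n)%N); last by apply/leP.
rewrite adjpow_add INR_big_sum big_Rmult_distr_l subnKC; last by apply/leP.
by apply: eq_bigr => z _; rewrite mult_INR -minusE; ring.
Qed.

Lemma Hmx_add s t x y :
  Hmx e (s + t) x y = (\big[Rplus/0]_(z : V) (Cmul (Hmx e s x z) (Hmx e t z y)).1,
                       \big[Rplus/0]_(z : V) (Cmul (Hmx e s x z) (Hmx e t z y)).2).
Proof.
have conv_z z := is_series_negi_conv (hcoef_le s x z) (hcoef_le t z y).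
rewrite /Hmx {1}/negi_series; congr pair; apply: is_series_unique.
- have := is_series_big (fun z => (conv_z z).1).
  by apply: is_series_ext => n; rewrite -big_Rmult_distr_l -hcoef_add.
- have := is_series_big (fun z => (conv_z z).2).
  by apply: is_series_ext => n; rewrite -big_Rmult_distr_l -hcoef_add.
Qed.

Lemma Hmx_0 x y : Hmx e 0 x y = Cscale (1, 0) (x == y).
Proof.
have hcoef0 k : (0 < k)%N -> hcoef e 0 x y k = 0.
  by case: k => // k _; rewrite /hcoef /expo_term /= /Rdiv; ring.
rewrite /Hmx /negi_series !(is_series_unique _ _ (is_series_head _)).
- by rewrite /hcoef /expo_term /=; case: (x == y) => /=; congr pair; field.
- by move=> k /hcoef0 ->; rewrite Rmult_0_r.
- by move=> k /hcoef0 ->; rewrite Rmult_0_r.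
Qed.

Lemma Hmx_opp t x y : Hmx e (- t) x y = Cconj (Hmx e t x y).
Proof.
rewrite /Hmx /negi_series /Cconj /= -Series_opp; congr pair; apply: Series_ext => k;
  have := negi_pow_odd k; rewrite /hcoef /expo_term pow_opp;
  case: (odd k) => np0; rewrite ?np0 /Rdiv; ring.
Qed.

Lemma Cmod_Hmx_diag_sub1_le t v :
  Rabs (Cmod (Hmx e t v v) - 1) <= 2 * (exp (Rabs t * INR #|V|) - 1).
Proof.
have re0 : (negi_pow 0).1 * hcoef e t v v 0 = 1 by rewrite /hcoef /expo_term /= eqxx /=; field.
have im0 : (negi_pow 0).2 * hcoef e t v v 0 = 0 by rewrite /= Rmult_0_l.
have := Series_sub_head_le (negi_re_le (hcoef_le t v v)).
have := Series_sub_head_le (negi_im_le (hcoef_le t v v)).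
rewrite re0 im0 Rminus_0_r; have := Cmod_sub1_le (Hmx e t v v); rewrite /Hmx /negi_series /=.
lra.
Qed.

Lemma Cmod_Hmx_diag_near1 v eps :
  0 < eps -> exists d, 0 < d /\ forall t, Rabs t < d -> Rabs (Cmod (Hmx e t v v) - 1) < eps.
Proof.
move=> eps_gt0; set r := Rmin (1 / 2) (eps / 4).
have N_gt0 : 0 < INR #|V| + 1 by have := pos_INR #|V|; lra.
have r_gt0 : 0 < r by apply: Rmin_glb_lt; lra.
exists (r / (INR #|V| + 1)); split => [|t t_lt]; first exact: Rdiv_lt_0_compat.
have X_ge0 : 0 <= Rabs t * INR #|V| by apply: Rmult_le_pos; [exact: Rabs_pos | exact: pos_INR].
have X_lt : Rabs t * INR #|V| < r.
  have := Rmult_lt_compat_r _ _ _ N_gt0 t_lt.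
  rewrite /Rdiv Rmult_assoc Rinv_l; last lra.
  by have := Rabs_pos t; nra.
have := Rmin_l (1 / 2) (eps / 4); have := Rmin_r (1 / 2) (eps / 4); rewrite -/r => *.
have := exp_sub1_le (conj X_ge0 (ltac:(lra) : Rabs t * INR #|V| <= 1 / 2)).
have := Cmod_Hmx_diag_sub1_le t v; lra.
Qed.

End TransitionMatrix.

Section StateTransfer.

Variables (V : finType) (e : rel V).

Definition Htransfer (t : R) (a b : V) (c : Cx) : Prop :=
  forall x, Hmx e t x a = Cscale c (x == b).

Definition pst_at (t : R) (a b : V) : Prop :=
  exists c, Cmod c = 1 /\ Htransfer t a b c.

Lemma Hmx_add_transfer s t a b c x :
  Htransfer t a b c -> Hmx e (s + t) x a = Cmul (Hmx e s x b) c.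
Proof.
move=> tr; rewrite Hmx_add; congr pair; rewrite (@big_Rplus_delta _ _ b) ?tr ?eqxx //;
  by move=> z zb; rewrite tr (negbTE zb) /Cmul /=; ring.
Qed.

Lemma Htransfer_add s t a b b' c d :
  Htransfer t a b c -> Htransfer s b b' d -> Htransfer (s + t) a b' (Cmul d c).
Proof.
move=> tr_ab tr_bb' x; rewrite (Hmx_add_transfer _ _ tr_ab) tr_bb'.
by case: (x == b') => //=; rewrite /Cmul /=; congr pair; ring.
Qed.

Lemma Htransfer_opp t a b c : Htransfer t a b c -> Htransfer (- t) a b (Cconj c).
Proof.
move=> tr x; rewrite Hmx_opp tr.
by case: (x == b) => //=; rewrite /Cconj /=; congr pair; ring.
Qed.

Lemma Htransfer_inv t a b c :
  Cmod c = 1 -> Htransfer t a b c -> Htransfer (- t) b a (Cconj c).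
Proof.
(* H(-t) H(t) = H(0) = I. *)
move=> c1 tr x; rewrite -(Cmul_Cconj_r (Hmx e (- t) x b) c1) -(Hmx_add_transfer _ _ tr).
rewrite Rplus_opp_l Hmx_0.
by case: (x == a) => /=; rewrite /Cmul /Cconj /=; congr pair; ring.
Qed.

Lemma pst_at_add s t a b b' : pst_at t a b -> pst_at s b b' -> pst_at (s + t) a b'.
Proof.
move=> [c [c1 tr_ab]] [d [d1 tr_bb']]; exists (Cmul d c).
by rewrite Cmod_Cmul c1 d1 Rmult_1_l; split; [| exact: Htransfer_add tr_ab tr_bb'].
Qed.

Lemma pst_at_inv t a b : pst_at t a b -> pst_at (- t) b a.
Proof.
move=> [c [c1 tr]]; exists (Cconj c).
by rewrite Cmod_Cconj; split; [| exact: Htransfer_inv].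
Qed.

Lemma pst_at_sym t a b : pst_at t a b -> pst_at t b a.
Proof.
move=> [c [c1 tr]]; rewrite -(Ropp_involutive t); apply: pst_at_inv.
by exists (Cconj c); rewrite Cmod_Cconj; split; [| exact: Htransfer_opp].
Qed.

Lemma pst_at_0 a : pst_at 0 a a.
Proof.
by exists (1, 0); split; [apply/Cmod_eq1 => /=; ring | move=> x; rewrite Hmx_0].
Qed.

Lemma pst_at_mulZ t a : pst_at t a a -> forall m : Z, pst_at (IZR m * t) a a.
Proof.
have pst_nat n : pst_at t a a -> pst_at (INR n * t) a a.
  move=> per; elim: n => [|n IH]; first by rewrite Rmult_0_l; exact: pst_at_0.
  by rewrite S_INR Rmult_plus_distr_r Rmult_1_l Rplus_comm; exact: pst_at_add IH per.
move=> per [|p|p] /=; first by rewrite Rmult_0_l; exact: pst_at_0.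
- by change (IZR (Z.pos p)) with (IPR p); rewrite -INR_IPR; exact: pst_nat.
- change (IZR (Z.neg p)) with (- IPR p); rewrite -INR_IPR -Ropp_mult_distr_l.
  exact/pst_at_inv/pst_nat.
Qed.

Lemma Cmod_Hmx_pst_at t a b : pst_at t a b -> Cmod (Hmx e t b a) = 1.
Proof. by move=> [c [c1 tr]]; rewrite tr eqxx. Qed.

Lemma Cmod_Hmx_add_pst_at s t a b x :
  pst_at t a b -> Cmod (Hmx e (s + t) x a) = Cmod (Hmx e s x b).
Proof.
by move=> [c [c1 tr]]; rewrite (Hmx_add_transfer _ _ tr) Cmod_Cmul c1 Rmult_1_r.
Qed.

End StateTransfer.

Lemma binomial_conv_S (A B : nat -> nat) n :
  (\sum_(k < n.+2) 'C(n.+1, k) * A k * B (n.+1 - k) =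
   \sum_(k < n.+1) 'C(n, k) * A k.+1 * B (n - k) +
   \sum_(k < n.+1) 'C(n, k) * A k * B (n.+1 - k))%N.
Proof.
rewrite big_ord_recl /= bin0.
under eq_bigr do rewrite binS mulnDl mulnDl.
rewrite big_split /= addnA addnC; congr (_ + _)%N.
rewrite [in RHS]big_ord_recl /= bin0 subn0; congr (_ + _)%N.
rewrite big_ord_recr /= bin_small // !mul0n addn0.
by apply: eq_bigr => k _; rewrite /bump /= add1n.
Qed.

Lemma expo_term_mul_binomial t n k :
  (k <= n)%N -> expo_term t n * INR 'C(n, k) = expo_term t k * expo_term t (n - k).
Proof.
move=> le_kn.
have fact_INR m : INR (fact m) = INR m`!.
  by congr INR; elim: m => [|m IH] //=; rewrite IH factS.
have n_fact : INR n`! = INR 'C(n, k) * (INR k`! * INR (n - k)`!).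
  by rewrite -(bin_fact le_kn) !mulnE !mult_INR.
have t_pow : t ^ n = t ^ k * t ^ (n - k) by rewrite -pow_add; congr pow; lia.
have C_ne0 : INR 'C(n, k) <> 0 by apply/not_0_INR/eqP; rewrite -lt0n bin_gt0.
have := INR_fact_neq_0 k; have := INR_fact_neq_0 (n - k).
by rewrite /expo_term t_pow !fact_INR n_fact => *; field.
Qed.

Lemma sum_pair_snd_fixed (V1 V2 : finType) (F : V1 * V2 -> nat) (P : pred V1) (b : V2) :
  (\sum_(z : V1 * V2) (if P z.1 && (b == z.2) then F z else 0) = \sum_(z1 | P z1) F (z1, b))%N.
Proof.
transitivity (\sum_(z1 : V1) \sum_(z2 : V2) (if P z1 && (b == z2) then F (z1, z2) else 0))%N.
  by rewrite pair_bigA; apply: eq_bigr => -[z1 z2] _.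
rewrite [RHS]big_mkcond; apply: eq_bigr => z1 _.
case: (P z1) => /=; last by rewrite big1.
rewrite (bigD1 b) //= eqxx big1 ?addn0 // => z2 z2b.
by rewrite eq_sym (negbTE z2b).
Qed.

Lemma sum_pair_fst_fixed (V1 V2 : finType) (F : V1 * V2 -> nat) (P : pred V2) (a : V1) :
  (\sum_(z : V1 * V2) (if (a == z.1) && P z.2 then F z else 0) = \sum_(z2 | P z2) F (a, z2))%N.
Proof.
transitivity (\sum_(z1 : V1) \sum_(z2 : V2) (if (a == z1) && P z2 then F (z1, z2) else 0))%N.
  by rewrite pair_bigA; apply: eq_bigr => -[z1 z2] _.
rewrite (bigD1 a) //= eqxx [X in (_ + X)%N]big1 ?addn0; first by rewrite [RHS]big_mkcond.
by move=> z1 z1a; rewrite big1 // => z2 _; rewrite eq_sym (negbTE z1a).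
Qed.

Section CartesianProduct.

Variables (V1 V2 : finType) (e1 : rel V1) (e2 : rel V2).
Hypothesis e1_irr : irreflexive e1.

Lemma sum_cart_rel (F : V1 * V2 -> nat) a b :
  (\sum_(z | cart_rel e1 e2 (a, b) z) F z =
   \sum_(z1 | e1 a z1) F (z1, b) + \sum_(z2 | e2 b z2) F (a, z2))%N.
Proof.
rewrite -sum_pair_snd_fixed -sum_pair_fst_fixed -big_split big_mkcond /=.
apply: eq_bigr => -[z1 z2] _; rewrite /cart_rel /=.
case E1: (e1 a z1 && (b == z2)); case E2: ((a == z1) && e2 b z2) => //=; rewrite ?addn0 //.
by move: E1 E2 => /andP [e1az1 _] /andP [/eqP az1 _]; rewrite -az1 e1_irr in e1az1.
Qed.

Lemma adjpow_cart n a b c d :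
  adjpow (cart_rel e1 e2) n (a, b) (c, d) =
  (\sum_(k < n.+1) 'C(n, k) * adjpow e1 k a c * adjpow e2 (n - k) b d)%N.
Proof.
elim: n a b => [|n IH] a b.
  by rewrite big_ord1 /= bin0 mul1n xpair_eqE; case: (a == c); case: (b == d).
rewrite /= sum_cart_rel (binomial_conv_S (fun k => adjpow e1 k a c) (fun k => adjpow e2 k b d)).
congr (_ + _)%N; under eq_bigr do rewrite IH; rewrite exchange_big /=; apply: eq_bigr => k _.
- by rewrite big_distrr /= big_distrl.
- by rewrite subSn ?big_distrr // -ltnS ltn_ord.
Qed.

Lemma hcoef_cart t a b c d n :
  hcoef (cart_rel e1 e2) t (a, b) (c, d) n = conv (hcoef e1 t a c) (hcoef e2 t b d) n.
Proof.
rewrite /hcoef adjpow_cart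
  (INR_sum_ord (fun k => 'C(n, k) * adjpow e1 k a c * adjpow e2 (n - k) b d)%N) scal_sum /conv.
apply: PartSum.sum_eq => k /leP le_kn.
rewrite !mult_INR; change (n - k)%coq_nat with (n - k)%N.
transitivity (expo_term t n * INR 'C(n, k) *
  (INR (adjpow e1 k a c) * INR (adjpow e2 (n - k) b d))); first by ring.
by rewrite expo_term_mul_binomial //; ring.
Qed.

Lemma Hmx_cart t a b c d :
  Hmx (cart_rel e1 e2) t (a, b) (c, d) = Cmul (Hmx e1 t a c) (Hmx e2 t b d).
Proof.
have [conv_re conv_im] := is_series_negi_conv (hcoef_le e1 t a c) (hcoef_le e2 t b d).
rewrite /Hmx {1}/negi_series; congr pair; apply: is_series_unique.
- by move: conv_re; apply: is_series_ext => n; rewrite hcoef_cart.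
- by move: conv_im; apply: is_series_ext => n; rewrite hcoef_cart.
Qed.

End CartesianProduct.

Lemma dirichlet_approx (al : R) (M : nat) :
  exists q p : Z, q <> 0%Z /\ Rabs (IZR q * al - IZR p) < / INR M.+1.
Proof.
(* Pigeonhole: M + 2 fractional parts of j al fall into M + 1 boxes of width 1 / (M + 1). *)
pose frac (j : nat) := INR j * al - IZR (Int_part (INR j * al)).
have frac_bd j : 0 <= frac j < 1 by have := base_Int_part (INR j * al); rewrite /frac; lra.
have N_gt0 : 0 < INR M.+1 by apply: lt_0_INR; lia.
pose box (j : nat) := Int_part (INR M.+1 * frac j).
have box_bd j : (0 <= box j < Z.of_nat M.+1)%Z.
  have := base_Int_part (INR M.+1 * frac j); have := frac_bd j; rewrite -/(box j) => fr bx.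
  have lo : -1 < IZR (box j) by nra.
  have hi : IZR (box j) < IZR (Z.of_nat M.+1) by rewrite -INR_IZR_INZ; nra.
  by move: lo hi => /lt_IZR lo /lt_IZR hi; lia.
pose F (j : 'I_M.+2) : 'I_M.+1 := inord (Z.to_nat (box j)).
have : ~~ injectiveb F by apply/injectiveP => /leq_card; rewrite !card_ord ltnn.
case/injectivePn => i [j ij Fij].
have box_ij : box i = box j.
  have box_lt (y : 'I_M.+2) : (Z.to_nat (box y) < M.+1)%N by have := box_bd y; lia.
  move/(congr1 val): Fij; rewrite /F /= !inordK //.
  by have := box_bd i; have := box_bd j; lia.
exists (Z.of_nat i - Z.of_nat j)%Z, (Int_part (INR i * al) - Int_part (INR j * al))%Z.
split; first by move=> ij0; apply: (negP ij); apply/eqP/val_inj => /=; lia.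
have := base_Int_part (INR M.+1 * frac i); have := base_Int_part (INR M.+1 * frac j).
rewrite -/(box i) -/(box j) box_ij => bj bi.
have -> : IZR (Z.of_nat i - Z.of_nat j) * al - IZR (Int_part (INR i * al) - Int_part (INR j * al))
          = frac i - frac j by rewrite /frac !minus_IZR -!INR_IZR_INZ; ring.
have close : Rabs (INR M.+1 * frac i - INR M.+1 * frac j) < 1 by apply: Rabs_def1; lra.
rewrite -Rmult_minus_distr_l Rabs_mult (Rabs_pos_eq (INR M.+1)) in close; last lra.
by apply: (Rmult_lt_reg_l (INR M.+1)) => //; rewrite Rinv_r //; lra.
Qed.

Lemma Zlincomb_dense (a b : R) :
  b <> 0 -> (forall q p : Z, IZR q * a = IZR p * b -> q = 0%Z) ->
  forall x d, 0 < d -> exists m k : Z, Rabs (IZR m * a + IZR k * b - x) < d.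
Proof.
move=> b_ne0 no_rel x d d_gt0.
have b_gt0 : 0 < Rabs b by exact: Rabs_pos_lt.
have [[|M] [M_lt M_gt0]] := archimed_cor1 (d / Rabs b) (Rdiv_lt_0_compat _ _ d_gt0 b_gt0).
  by lia.
have [q [p [q_ne0 qp_lt]]] := dirichlet_approx (a / b) M.
set r := IZR q * a - IZR p * b.
have r_lt : Rabs r < d.
  have -> : r = b * (IZR q * (a / b) - IZR p) by rewrite /r; field.
  rewrite Rabs_mult; have := Rabs_pos (IZR q * (a / b) - IZR p).
  have := Rmult_lt_compat_l _ _ _ b_gt0 M_lt.
  have -> : Rabs b * (d / Rabs b) = d by field; lra.
  nra.
have r_ne0 : r <> 0 by move=> r0; apply/q_ne0/(no_rel q p); rewrite /r in r0; lra.
(* r is a nonzero element of Z a + Z b of size < d, so some multiple of r is within |r| of x. *)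
set n := Int_part (x / r).
exists (n * q)%Z, (- (n * p))%Z.
have -> : IZR (n * q) * a + IZR (- (n * p)) * b - x = r * (IZR n - x / r).
  by rewrite opp_IZR !mult_IZR /r; field.
rewrite Rabs_mult; have := base_Int_part (x / r); rewrite -/n => n_bd.
have : Rabs (IZR n - x / r) < 1 by apply: Rabs_def1; lra.
have := Rabs_pos (IZR n - x / r); nra.
Qed.

Lemma Q_lin_indep_no_Zrel (tau eta : R) :
  Q_lin_indep tau eta -> forall q p : Z, IZR q * tau = IZR p * (2 * eta) -> q = 0%Z.
Proof.
move=> indep q p qp; have Q2R_Z z : Q2R (inject_Z z) = IZR z by rewrite /Q2R /= Rinv_1 Rmult_1_r.
have rel : Q2R (inject_Z q) * tau + Q2R (inject_Z (- (2 * p))) * eta = 0.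
  by rewrite !Q2R_Z opp_IZR mult_IZR; lra.
by case: (indep _ _ rel) => /inject_Z_injective.
Qed.

Unset Implicit Arguments.

Theorem theorem4p2 (V1 V2 : finType) (e1 : rel V1) (e2 : rel V2)
    (G1 : simple_graph e1) (G2 : simple_graph e2)
    (u : V1) (v w : V2) (tau eta : R) :
  tau <> 0 -> eta <> 0 ->
  (exists g : Cx, Cmod g = 1 /\
     forall x : V1, H_entry e1 tau x u (Cscale g (x == u))) ->
  (exists g' : Cx, Cmod g' = 1 /\
     forall x : V2, H_entry e2 eta x w (Cscale g' (x == v))) ->
  Q_lin_indep tau eta ->
  pgst (cart_rel e1 e2) (u, v) (u, w).
Proof.
move=> _ eta_ne0 [g [g1 per]] [g' [g'1 pst]] indep eps eps_gt0.
have e1_irr : irreflexive e1 by case: G1.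
have per_u : pst_at e1 tau u u by exists g; split=> // x; rewrite -(H_entry_uniq (per x)).
have pst_wv : pst_at e2 eta w v by exists g'; split=> // x; rewrite -(H_entry_uniq (pst x)).
have per_w : pst_at e2 (2 * eta) w w.
  by rewrite (_ : 2 * eta = eta + eta); [exact: pst_at_add pst_wv (pst_at_sym pst_wv) | ring].
have [d [d_gt0 near1]] := Cmod_Hmx_diag_near1 e2 v eps_gt0.
have [m [k mk_lt]] := Zlincomb_dense (ltac:(lra) : 2 * eta <> 0) (Q_lin_indep_no_Zrel indep) eta d_gt0.
have pst_wv_k : pst_at e2 (eta + IZR (- k) * (2 * eta)) w v.
  exact: pst_at_add (pst_at_mulZ per_w (- k)) pst_wv.
exists (IZR m * tau), (Hmx (cart_rel e1 e2) (IZR m * tau) (u, v) (u, w)).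
split; first exact: H_entry_Hmx.
rewrite Hmx_cart // Cmod_Cmul (Cmod_Hmx_pst_at (pst_at_mulZ per_u m)) Rmult_1_l.
have -> : IZR m * tau = (IZR m * tau + IZR k * (2 * eta) - eta) + (eta + IZR (- k) * (2 * eta)).
  by rewrite opp_IZR; ring.
by rewrite (Cmod_Hmx_add_pst_at _ _ pst_wv_k); exact: near1.
Qed.
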